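(* Let $A,F_1,\dots,F_k,B$ be a sequence of faces of $\mathcal{C}$, all of the same dimension, such that each face opposes the next one. Then the categories $e_ARe_A\text{-mod}$ and $e_BRe_B\text{-mod}$ of finite-dimensional modules are equivalent.
   Context: Let $\mathcal{H}$ be a finite arrangement of linear hyperplanes in $\mathbb{R}^n$, each $H$ cut out by a fixed real linear form $f_H$, with sign vectors $\sigma(x)\in\{+,-,0\}^{\mathcal{H}}$. Faces are classes of points with equal sign vector; $\mathcal{C}$ is the set of faces, ordered by $C'\le C$ iff $C'\subseteq\overline{C}$. Two faces $A,B$ of equal dimension $d\ge1$ oppose each other if they have the same linear span and there is a face $C$ of dimension $d-1$, $C\le A$, $C\le B$, with $\sigma(A)_H=-\sigma(B)_H$ for every $H$ with $\sigma(C)_H=0$. $A,B,C$ are collinear if a line segment meets $A,B,C$ in that order. $R$ is the $\mathbb{C}$-algebra generated by $e_C$ ($C\in\mathcal{C}$) with relations $e_C^2=e_C$; $e_Ae_C=e_Ae_Be_C$ for collinear $A,B,C$; $e_Ae_B=e_B=e_Be_A$ for $A\le B$; localised by inverting all $e_Ae_Be_A+(1-e_A)$ with $A,B$ opposing. *)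

From mathcomp Require Import all_boot all_order all_algebra.
From mathcomp Require Import complex.
From mathcomp Require Import boolp reals.
Set Implicit Arguments.
Unset Strict Implicit.
Unset Printing Implicit Defensive.
Import Order.TTheory GRing.Theory Num.Theory.
Local Open Scope ring_scope.

(* Hyperplane arrangement in R^n, R : realType (the real numbers).     *)
(* Points are row vectors 'rV[R]_n; hyperplane H : 'I_h is cut out by  *)
(* the linear form x |-> f_H(x) = sum_j (f H) 0 j * x 0 j.             *)
Section Arrangement.
Variables (R : realType) (n h : nat) (f : 'I_h -> 'rV[R]_n).

Definition lform (H : 'I_h) (x : 'rV[R]_n) : R := \sum_(j < n) f H 0 j * x 0 j.

Definition sgvec (x : 'rV[R]_n) : {ffun 'I_h -> R} := [ffun H => Num.sg (lform H x)].

(* faces = realized sign vectors (one per class of points) *)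
Definition face := {s : {ffun 'I_h -> R} | `[< exists x, sgvec x = s >]}.

Definition fpts (A : face) : 'rV[R]_n -> Prop := fun x => sgvec x = val A.

Definition in_closure (P : 'rV[R]_n -> Prop) (x : 'rV[R]_n) : Prop :=
  forall eps : R, 0 < eps ->
    exists y, P y /\ forall j : 'I_n, `|x 0 j - y 0 j| < eps.

Definition face_le (C' C : face) : Prop :=
  forall x, fpts C' x -> in_closure (fpts C) x.

Definition in_span (P : 'rV[R]_n -> Prop) (v : 'rV[R]_n) : Prop :=
  exists m (w : 'I_m -> 'rV[R]_n) (c : 'I_m -> R),
    (forall i, P (w i)) /\ v = \sum_(i < m) c i *: w i.

Definition has_dim (P : 'rV[R]_n -> Prop) (d : nat) : Prop :=
  (exists M : 'M[R]_(d, n), (forall i, P (row i M)) /\ \rank M = d) /\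
  (forall m (M : 'M[R]_(m, n)), (forall i, P (row i M)) -> (\rank M <= d)%N).

Definition face_dim (A : face) (d : nat) : Prop := has_dim (fpts A) d.

Definition same_span (A B : face) : Prop :=
  forall v, in_span (fpts A) v <-> in_span (fpts B) v.

Definition opposing (A B : face) : Prop :=
  exists d : nat, (1 <= d)%N /\ face_dim A d /\ face_dim B d /\ same_span A B /\
    exists C : face, face_dim C d.-1 /\ face_le C A /\ face_le C B /\
      forall H : 'I_h, val C H = 0 -> val A H = - val B H.

Definition collinear (A B C : face) : Prop :=
  exists (a b c : 'rV[R]_n) (t : R),
    fpts A a /\ fpts B b /\ fpts C c /\ 0 <= t <= 1 /\
    b = (1 - t) *: a + t *: c.

End Arrangement.

Section Algebra.
Variables (R : realType) (n h : nat) (f : 'I_h -> 'rV[R]_n).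
Local Notation C := R[i].

Definition is_unit_elt (T : algType C) (u : T) : Prop :=
  exists y : T, y * u = 1 /\ u * y = 1.

Definition R_relations (T : algType C) (e : face f -> T) : Prop :=
  (forall A, e A * e A = e A) /\
  (forall A B D, collinear A B D -> e A * e D = e A * e B * e D) /\
  (forall A B, face_le A B -> e A * e B = e B /\ e B * e A = e B) /\
  (forall A B, opposing A B -> is_unit_elt (e A * e B * e A + (1 - e A))).

Definition is_alg_morph (T1 T2 : algType C) (phi : T1 -> T2) : Prop :=
  phi 1 = 1 /\ (forall x y, phi (x + y) = phi x + phi y) /\
  (forall x y, phi (x * y) = phi x * phi y) /\
  (forall (c : C) x, phi (c *: x) = c *: phi x).

(* (S, e) is the C-algebra generated by the e_A subject to the relations,
   localised at the elements e_A e_B e_A + (1 - e_A): it is initial among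
   C-algebras equipped with such elements. *)
Definition is_R_algebra (S : algType C) (e : face f -> S) : Prop :=
  R_relations e /\
  forall (T : algType C) (e' : face f -> T), R_relations e' ->
    exists phi : S -> T, is_alg_morph phi /\ (forall A, phi (e A) = e' A) /\
      forall psi : S -> T, is_alg_morph psi -> (forall A, psi (e A) = e' A) ->
        forall x, psi x = phi x.

End Algebra.

Section CornerModules.
Variables (K : fieldType) (S : algType K) (e : S).

(* a finite-dimensional left e S e-module: K^m with the action of e x e given
   by a matrix acting on column vectors; the action is recorded on all of S
   but is required to factor through x |-> e x e. *)
Record cmod := CMod {
  cdim : nat;
  cact : S -> 'M[K]_cdim;
  cact_proj : forall x, cact x = cact (e * x * e);
  cact_add : forall x y, cact (x + y) = cact x + cact y;
  cact_scale : forall (c : K) x, cact (c *: x) = c *: cact x;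
  cact_mul : forall x y,
      cact ((e * x * e) * (e * y * e)) = cact (e * x * e) *m cact (e * y * e);
  cact_unit : cact e = 1%:M
}.

Definition chom (M N : cmod) (g : 'M[K]_(cdim N, cdim M)) : Prop :=
  forall x, g *m cact M x = cact N x *m g.

Definition ciso (M N : cmod) (g : 'M[K]_(cdim N, cdim M)) : Prop :=
  chom g /\ exists g' : 'M[K]_(cdim M, cdim N),
    chom g' /\ g' *m g = 1%:M /\ g *m g' = 1%:M.

End CornerModules.

Section Functors.
Variables (K : fieldType) (S1 S2 : algType K) (e1 : S1) (e2 : S2).

Record cfunctor := CFunctor {
  Fobj : cmod e1 -> cmod e2;
  Fmor : forall M N : cmod e1,
      'M[K]_(cdim N, cdim M) -> 'M[K]_(cdim (Fobj N), cdim (Fobj M));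
  Fmor_hom : forall M N g, chom g -> chom (@Fmor M N g);
  Fmor_id : forall M, @Fmor M M 1%:M = 1%:M;
  Fmor_comp : forall M N P (g : 'M[K]_(cdim N, cdim M)) (g' : 'M[K]_(cdim P, cdim N)),
      chom g -> chom g' -> Fmor (g' *m g) = Fmor g' *m Fmor g
}.

End Functors.

Definition natiso_id (K : fieldType) (S1 S2 : algType K) (e1 : S1) (e2 : S2)
    (F : cfunctor e1 e2) (G : cfunctor e2 e1) : Prop :=
  exists eta : forall M : cmod e1, 'M[K]_(cdim M, cdim (Fobj G (Fobj F M))),
    (forall M, ciso (eta M)) /\
    forall (M N : cmod e1) (g : 'M[K]_(cdim N, cdim M)), chom g ->
      eta N *m Fmor G (Fmor F g) = g *m eta M.

Definition cmod_equiv (K : fieldType) (S1 S2 : algType K) (e1 : S1) (e2 : S2) : Prop :=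
  exists (F : cfunctor e1 e2) (G : cfunctor e2 e1), natiso_id F G /\ natiso_id G F.

From mathcomp Require Import all_boot all_order all_algebra.
From mathcomp Require Import complex.
From mathcomp Require Import boolp reals.
Set Implicit Arguments.
Unset Strict Implicit.
Unset Printing Implicit Defensive.
Import GRing.Theory Num.Theory.
Local Open Scope ring_scope.

(* Write p = e_A and q = e_B for opposing faces A, B.  The localisation makes
   pqp invertible in the corner pSp and qpq invertible in qSq; with x the
   inverse of pqp, the elements u = pq and v = qpx satisfy uv = p and vu = q,
   i.e. p and q are Murray-von Neumann equivalent.  This relation is
   transitive, so it holds between e_A and e_B along the chain of opposing
   faces, and for equivalent idempotents y |-> u y v identifies qSq with pSp:
   restricting scalars along it in both directions gives mutually inverse
   equivalences of the categories of corner modules. *)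

Section MurrayVonNeumann.
Variable S : pzRingType.

Definition mvn (p q : S) : Prop :=
  exists u v : S, [/\ u * v = p, v * u = q, u * q = u & v * p = v].

Lemma mvn_refl (p : S) : p * p = p -> mvn p p.
Proof. by move=> pp; exists p, p. Qed.

Lemma mvn_trans (p q r : S) : mvn p q -> mvn q r -> mvn p r.
Proof.
move=> [u1 [v1 [uv1 vu1 uq1 vp1]]] [u2 [v2 [uv2 vu2 uq2 vp2]]].
exists (u1 * u2), (v2 * v1); split.
- by rewrite -mulrA (mulrA u2) uv2 mulrA uq1 uv1.
- by rewrite -mulrA (mulrA v1) vu1 mulrA vp2 vu2.
- by rewrite -mulrA uq2.
- by rewrite -mulrA vp1.
Qed.

Lemma mvn_chain (g : nat -> S) (m : nat) : g 0%N * g 0%N = g 0%N ->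
  (forall i, (i < m)%N -> mvn (g i) (g i.+1)) -> mvn (g 0%N) (g m).
Proof.
move=> g0 step; elim: m step => [|m IH] step; first exact: mvn_refl.
apply: mvn_trans (IH _) (step m _) => // i lt_im.
by apply: step; rewrite ltnS ltnW.
Qed.

Lemma corner_inverse (p a y : S) : p * p = p ->
  y * (p * a * p + (1 - p)) = 1 -> (p * a * p + (1 - p)) * y = 1 ->
  p * y * p * (p * a * p) = p /\ p * a * p * (p * y * p) = p.
Proof.
move=> pp yw1 w1y; set w := p * a * p.
have pw : p * w = w by rewrite /w !mulrA pp.
have wp : w * p = w by rewrite /w -!mulrA pp.
have w1p : (w + (1 - p)) * p = w by rewrite mulrDl mulrBl mul1r pp subrr addr0.
have pw1 : p * (w + (1 - p)) = w by rewrite mulrDr mulrBr mulr1 pp subrr addr0.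
have yw : y * w = p by rewrite -w1p mulrA yw1 mul1r.
have wy : w * y = p by rewrite -pw1 -mulrA w1y mulr1.
split; first by rewrite -!mulrA pw yw pp.
by rewrite !mulrA wp wy pp.
Qed.

Lemma mvn_of_corner_units (p q : S) : p * p = p -> q * q = q ->
  (exists y, y * (p * q * p + (1 - p)) = 1 /\ (p * q * p + (1 - p)) * y = 1) ->
  (exists z, z * (q * p * q + (1 - q)) = 1 /\ (q * p * q + (1 - q)) * z = 1) ->
  mvn p q.
Proof.
move=> pp qq [y [yw1 w1y]] [z [zw1 w1z]].
have [xw wx] := corner_inverse pp yw1 w1y.
have [_ wz] := corner_inverse qq zw1 w1z.
have xp : p * y * p * p = p * y * p by rewrite -mulrA pp.
set x := p * y * p in xw wx xp; set x' := q * z * q in wz; clearbody x x'.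
exists (p * q), (q * p * x); split.
- by rewrite !mulrA -(mulrA p q q) qq wx.
- set t := q * p * x * (p * q).
  have tq : t * q = t by rewrite /t -!mulrA qq.
  have tw : t * (q * p * q) = q * p * q.
    transitivity (q * p * (x * (p * q * p)) * q).
      by rewrite /t !mulrA -(mulrA _ q q) qq.
    by rewrite xw -(mulrA q p p) pp.
  by rewrite -tq -wz mulrA tw.
- by rewrite -mulrA qq.
- by rewrite -mulrA xp.
Qed.

End MurrayVonNeumann.

Section Transfer.
Variables (K : fieldType) (S : algType K) (p q u v : S).
Hypotheses (uv : u * v = p) (vu : v * u = q) (uq : u * q = u) (vp : v * p = v).

Let qv : q * v = v. Proof. by rewrite -vu -mulrA uv vp. Qed.
Let qq : q * q = q. Proof. by rewrite -{1}vu -mulrA uq. Qed.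
Let pu : p * u = u. Proof. by rewrite -uv -mulrA vu uq. Qed.
Let pXp X : p * (u * X * v) * p = u * X * v.
Proof. by rewrite !mulrA pu -!mulrA vp. Qed.
Let uXv_mul X Y : u * X * v * (u * Y * v) = u * (X * q * Y) * v.
Proof. by rewrite !mulrA -(mulrA _ v u) vu. Qed.

Section Module.
Variable M : cmod p.

Let act y := cact M (u * y * v).

Let act_proj y : act y = act (q * y * q).
Proof. by rewrite /act !mulrA uq -!mulrA qv. Qed.

Let act_add x y : act (x + y) = act x + act y.
Proof. by rewrite /act mulrDr mulrDl cact_add. Qed.

Let act_scale (c : K) x : act (c *: x) = c *: act x.
Proof. by rewrite /act -scalerAr -scalerAl cact_scale. Qed.

Let act_mul x y :
  act ((q * x * q) * (q * y * q)) = act (q * x * q) *m act (q * y * q).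
Proof.
rewrite /act -(pXp (q * x * q)) -(pXp (q * y * q)) -cact_mul !pXp.
by rewrite uXv_mul -(mulrA _ q q) qq.
Qed.

Let act_unit : act q = 1%:M.
Proof. by rewrite /act uq uv cact_unit. Qed.

Definition transfer_cmod : cmod q := CMod act_proj act_add act_scale act_mul act_unit.

End Module.

Lemma transfer_chom (M N : cmod p) (g : 'M[K]_(cdim N, cdim M)) :
  chom g -> @chom K S q (transfer_cmod M) (transfer_cmod N) g.
Proof. by move=> gh x; apply: gh. Qed.

Definition transfer : cfunctor p q :=
  @CFunctor K S S p q transfer_cmod (fun M N g => g) transfer_chom
    (fun _ => erefl) (fun _ _ _ _ _ _ _ => erefl).

End Transfer.

Section TransferEquivalence.
Variables (K : fieldType) (S : algType K) (p q u v : S).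
Hypotheses (uv : u * v = p) (vu : v * u = q) (uq : u * q = u) (vp : v * p = v).

Lemma transferK (M : cmod p) x :
  cact (Fobj (transfer vu uv vp uq) (Fobj (transfer uv vu uq vp) M)) x = cact M x.
Proof. by rewrite /= !mulrA uv -!mulrA uv mulrA -cact_proj. Qed.

Lemma transfer_natiso : natiso_id (transfer uv vu uq vp) (transfer vu uv vp uq).
Proof.
have id_chom M : chom (1%:M : 'M[K]_(cdim M, cdim (Fobj (transfer vu uv vp uq)
    (Fobj (transfer uv vu uq vp) M)))).
  by move=> x; rewrite mul1mx mulmx1 transferK.
exists (fun M => 1%:M); split => [M | M N g _]; last by rewrite mul1mx mulmx1.
split; first exact: id_chom.
exists 1%:M; rewrite mul1mx; split => // x.
by rewrite mul1mx mulmx1 transferK.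
Qed.

End TransferEquivalence.

Lemma mvn_cmod_equiv (K : fieldType) (S : algType K) (p q : S) :
  mvn p q -> cmod_equiv p q.
Proof.
move=> [u [v [uv vu uq vp]]].
exists (transfer uv vu uq vp), (transfer vu uv vp uq).
by split; apply: transfer_natiso.
Qed.

Lemma opposing_sym (R : realType) (n h : nat) (f : 'I_h -> 'rV[R]_n) (A B : face f) :
  opposing A B -> opposing B A.
Proof.
move=> [d [d1 [dA [dB [AB [C [dC [CA [CB CAB]]]]]]]]].
exists d; do 3 split => //; split; first by move=> w; split => /AB.
exists C; do 3 split => //.
by move=> H /CAB ->; rewrite opprK.
Qed.

Theorem corollary4p2 (R : realType) (n h : nat) (f : 'I_h -> 'rV[R]_n)
  (f_nz : forall H, f H != 0)
  (S : algType R[i]) (e : face f -> S) (HS : is_R_algebra e)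
  (k : nat) (A B : face f) (F : nat -> face f)
  (hA : F 0%N = A) (hB : F k.+1 = B)
  (hdim : exists d : nat, forall i, (i <= k.+1)%N -> face_dim (F i) d)
  (hopp : forall i, (i <= k)%N -> opposing (F i) (F i.+1)) :
  cmod_equiv (e A) (e B).
Proof.
have [[e_idem [_ [_ e_opp]]] _] := HS.
apply: mvn_cmod_equiv; rewrite -hA -hB.
apply: (mvn_chain (g := fun i => e (F i))) => [|i /hopp FF]; first exact: e_idem.
by apply: mvn_of_corner_units; rewrite ?e_idem //; apply: e_opp => //; apply: opposing_sym.
Qed.
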